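(* Let $|\cdot|$ denote the Euclidean norm on $\mathbb{R}^n$. Let $l_0,l_1,\bar l_0,\bar l_1\in\mathbb{R}^n$ satisfy $$|l_1-\bar l_0|\ge |l_1-l_0|,\qquad |\bar l_1-l_0|\ge |\bar l_1-\bar l_0|,$$ and $|l_1-l_0|=|\bar l_1-\bar l_0|$. For $t\in[0,1]$ write $l_t=(1-t)l_0+tl_1$ and $\bar l_t=(1-t)\bar l_0+t\bar l_1$. Then $$|l_1-\bar l_1|\le \frac{2}{t}\,|l_s-\bar l_t|\qquad\text{for all } 0<t\le s\le 1.$$ *)

From mathcomp Require Import all_boot all_order all_algebra.
Set Implicit Arguments. Unset Strict Implicit. Unset Printing Implicit Defensive.
Import Order.TTheory GRing.Theory Num.Theory.
Local Open Scope ring_scope.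

Definition enorm (R : rcfType) (n : nat) (v : 'rV[R]_n) : R :=
  Num.sqrt (\sum_(i < n) v 0 i ^+ 2).

Definition interp (R : rcfType) (n : nat) (l0 l1 : 'rV[R]_n) (t : R) : 'rV[R]_n :=
  (1 - t) *: l0 + t *: l1.

From mathcomp Require Import all_boot all_order all_algebra.
Import Order.TTheory GRing.Theory Num.Theory.
From mathcomp Require Import ring lra.
Set Implicit Arguments. Unset Strict Implicit. Unset Printing Implicit Defensive.
Local Open Scope ring_scope.

(* Put w = l0 - bl0, u = l1 - l0, v = bl1 - bl0, so that l_s - bl_t = w + s u - t v.
   The hypotheses say |w|^2 + 2<w,u> >= 0, |w|^2 - 2<w,v> >= 0 and |u| = |v|.
   From them one gets |l_t - bl_t| >= t |l1 - bl1| and |l_s - bl_t| >= (s - t) |u|,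
   while l_t - bl_t = (l_s - bl_t) - (s - t) u, so by the parallelogram law
     t^2 |l1 - bl1|^2 <= |l_t - bl_t|^2 <= 2 |l_s - bl_t|^2 + 2 (s - t)^2 |u|^2
                      <= 4 |l_s - bl_t|^2. *)

Section SquaredNorm.
Variables (R : rcfType) (n : nat).
Implicit Types (x y w u v : 'rV[R]_n) (a b c : R).

Definition sqnorm x : R := \sum_(i < n) x 0 i ^+ 2.

Definition dotr x y : R := \sum_(i < n) x 0 i * y 0 i.

Definition gram w u v a b c : R :=
  a ^+ 2 * dotr w w + b ^+ 2 * dotr u u + c ^+ 2 * dotr v v
  + 2 * a * b * dotr w u + 2 * a * c * dotr w v + 2 * b * c * dotr u v.

Lemma enormE x : enorm x = Num.sqrt (sqnorm x). Proof. by []. Qed.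

Lemma sqnorm_ge0 x : 0 <= sqnorm x.
Proof. by apply: sumr_ge0 => i _; exact: sqr_ge0. Qed.

Lemma sqnormZ a x : sqnorm (a *: x) = a ^+ 2 * sqnorm x.
Proof.
by rewrite /sqnorm mulr_sumr; apply: eq_bigr => i _; rewrite mxE exprMn.
Qed.

Lemma sqnormB_le x y : sqnorm (x - y) <= 2 * sqnorm x + 2 * sqnorm y.
Proof.
rewrite /sqnorm !mulr_sumr -big_split /=; apply: ler_sum => i _.
by rewrite !mxE; have := sqr_ge0 (x 0 i + y 0 i); lra.
Qed.

Lemma sqnorm_gram w u v a b c x :
  (forall i, x 0 i = a * w 0 i + b * u 0 i + c * v 0 i) ->
  sqnorm x = gram w u v a b c.
Proof.
move=> xE; rewrite /gram /dotr !mulr_sumr -!big_split /=.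
by apply: eq_bigr => i _; rewrite xE; ring.
Qed.

Lemma gram_ge0 w u v a b c : 0 <= gram w u v a b c.
Proof.
rewrite -(@sqnorm_gram _ _ _ _ _ _ (a *: w + b *: u + c *: v)) ?sqnorm_ge0 //.
by move=> i; rewrite !mxE.
Qed.

End SquaredNorm.

Lemma interp_shift (R : rcfType) (n : nat) (l0 l1 : 'rV[R]_n) (s t : R) :
  interp l0 l1 t = interp l0 l1 s - (s - t) *: (l1 - l0).
Proof. by apply/rowP => i; rewrite /interp !mxE; ring. Qed.

Section Trapezoid.
Variables (R : rcfType) (n : nat) (l0 l1 bl0 bl1 : 'rV[R]_n).
Hypothesis far_l1 : sqnorm (l1 - l0) <= sqnorm (l1 - bl0).
Hypothesis far_bl1 : sqnorm (bl1 - bl0) <= sqnorm (bl1 - l0).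
Hypothesis eq_len : sqnorm (l1 - l0) = sqnorm (bl1 - bl0).

Let w := l0 - bl0.
Let u := l1 - l0.
Let v := bl1 - bl0.
Let q := gram w u v.

Let sqnorm_wuv (x : 'rV[R]_n) a b c :
  (forall i, x 0 i = a * w 0 i + b * u 0 i + c * v 0 i) -> sqnorm x = q a b c.
Proof. exact: sqnorm_gram. Qed.

Ltac solve_wuv := by move=> i; rewrite /interp /w /u /v !mxE; ring.

Lemma dotr_vv : dotr v v = dotr u u.
Proof.
move: eq_len; rewrite (@sqnorm_wuv _ 0 1 0) ?(@sqnorm_wuv _ 0 0 1); try solve_wuv.
by rewrite /q /gram; lra.
Qed.

Lemma dotr_uv_le : dotr u v <= dotr u u.
Proof. by have := gram_ge0 w u v 0 1 (-1); rewrite /gram dotr_vv; lra. Qed.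

Lemma dotr_ww_ge0 : 0 <= dotr w w.
Proof. by have := gram_ge0 w u v 1 0 0; rewrite /gram; lra. Qed.

Lemma dotr_ww_wu_ge0 : 0 <= dotr w w + 2 * dotr w u.
Proof.
move: far_l1; rewrite (@sqnorm_wuv _ 0 1 0) ?(@sqnorm_wuv (l1 - bl0) 1 1 0); try solve_wuv.
by rewrite /q /gram; lra.
Qed.

Lemma dotr_ww_wv_ge0 : 0 <= dotr w w - 2 * dotr w v.
Proof.
move: far_bl1; rewrite (@sqnorm_wuv _ 0 0 1) ?(@sqnorm_wuv (bl1 - l0) (-1) 0 1); try solve_wuv.
by rewrite /q /gram; lra.
Qed.

Lemma sqnorm_ends : sqnorm (l1 - bl1) = q 1 1 (-1).
Proof. by apply: sqnorm_wuv; solve_wuv. Qed.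

Lemma sqnorm_interp s t :
  sqnorm (interp l0 l1 s - interp bl0 bl1 t) = q 1 s (- t).
Proof. by apply: sqnorm_wuv; solve_wuv. Qed.

Lemma interp_gap_ge t : 0 <= t <= 1 ->
  t ^+ 2 * sqnorm (l1 - bl1) <= sqnorm (interp l0 l1 t - interp bl0 bl1 t).
Proof.
case/andP=> t0 t1; rewrite sqnorm_ends sqnorm_interp /q /gram dotr_vv.
have t1' : 0 <= 1 - t by lra.
have := mulr_ge0 t1' (mulr_ge0 t1' dotr_ww_ge0).
have := mulr_ge0 (mulr_ge0 t1' t0) (addr_ge0 dotr_ww_wu_ge0 dotr_ww_wv_ge0).
lra.
Qed.

Lemma interp_lag_ge s t : 0 <= t -> t <= s -> s <= 1 ->
  (s - t) ^+ 2 * sqnorm (l1 - l0) <= sqnorm (interp l0 l1 s - interp bl0 bl1 t).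
Proof.
move=> t0 ts s1.
have Q0 : 0 <= q 1 1 (-1) by rewrite -sqnorm_ends sqnorm_ge0.
rewrite (@sqnorm_wuv _ 0 1 0); last by move=> i; rewrite /u !mxE; ring.
rewrite sqnorm_interp; move: Q0; rewrite /q /gram dotr_vv => Q0.
have A := dotr_ww_wu_ge0; have B := dotr_ww_wv_ge0; have W := dotr_ww_ge0.
have UV : 0 <= dotr u u - dotr u v by rewrite subr_ge0 dotr_uv_le.
have s0 : 0 <= s := le_trans t0 ts.
have [st1 | st1] := lerP (s + t) 1.
- have st1' : 0 <= 1 - s - t by lra.
  have := mulr_ge0 s0 A; have := mulr_ge0 t0 B; have := mulr_ge0 st1' W.
  have := mulr_ge0 (mulr_ge0 s0 t0) UV.
  lra.
- have s1' : 0 <= 1 - s by lra.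
  have t1' : 0 <= 1 - t by lra.
  have st1' : 0 <= s + t - 1 by lra.
  have := mulr_ge0 t1' A; have := mulr_ge0 s1' B; have := mulr_ge0 st1' Q0.
  have := mulr_ge0 (mulr_ge0 s1' t1') UV.
  lra.
Qed.

Lemma interp_gap_sq_le s t : 0 < t -> t <= s -> s <= 1 ->
  t ^+ 2 * sqnorm (l1 - bl1) <= 4 * sqnorm (interp l0 l1 s - interp bl0 bl1 t).
Proof.
move=> t0 ts s1.
have gap : t ^+ 2 * sqnorm (l1 - bl1) <= sqnorm (interp l0 l1 t - interp bl0 bl1 t).
  by apply: interp_gap_ge; rewrite (ltW t0) (le_trans ts s1).
have para : sqnorm (interp l0 l1 t - interp bl0 bl1 t)
    <= 2 * sqnorm (interp l0 l1 s - interp bl0 bl1 t) + 2 * ((s - t) ^+ 2 * sqnorm u).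
  by rewrite (interp_shift l0 l1 s t) addrAC -sqnormZ sqnormB_le.
have lag := interp_lag_ge (ltW t0) ts s1.
lra.
Qed.
End Trapezoid.

Lemma sqrt_le_div_sqrt (R : rcfType) (c t x y : R) : 0 <= c -> 0 < t -> 0 <= y ->
  t ^+ 2 * x <= c ^+ 2 * y -> Num.sqrt x <= c / t * Num.sqrt y.
Proof.
move=> c0 t0 y0 le_xy.
rewrite -[c / t]ger0_norm ?divr_ge0 ?(ltW t0) // -sqrtr_sqr -sqrtrM ?sqr_ge0 //.
rewrite ler_sqrt ?mulr_ge0 ?sqr_ge0 ?invr_ge0 ?(ltW t0) //.
by rewrite exprMn exprVn mulrAC ler_pdivlMr ?exprn_gt0 // mulrC.
Qed.

Theorem corollary3p3 (R : rcfType) (n : nat) (l0 l1 bl0 bl1 : 'rV[R]_n)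
  (h1 : enorm (l1 - l0) <= enorm (l1 - bl0))
  (h2 : enorm (bl1 - bl0) <= enorm (bl1 - l0))
  (h3 : enorm (l1 - l0) = enorm (bl1 - bl0)) :
  forall t s : R, 0 < t -> t <= s -> s <= 1 ->
    enorm (l1 - bl1) <= 2 / t * enorm (interp l0 l1 s - interp bl0 bl1 t).
Proof.
move=> t s t0 ts s1.
move: h1 h2 h3; rewrite !enormE !ler_sqrt ?sqnorm_ge0 // => h1 h2 /eqP.
rewrite eqr_sqrt ?sqnorm_ge0 // => /eqP h3.
apply: sqrt_le_div_sqrt; rewrite ?sqnorm_ge0 //.
by rewrite [2 ^+ 2]expr2 -natrM; exact: interp_gap_sq_le.
Qed.
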